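(* Let $\mathbf K$ be a commutative field, $p,q,r\in\mathbb N$, $A\in\mathbf K^{\mathcal M_{p\times r}}$ and $B\in\mathbf K^{\mathcal M_{r\times q}}$. Then $$\dim\big(\overline{AB}^{rec}\big)\leq \dim\big(\overline{A}^{rec}\big)\,\dim\big(\overline{B}^{rec}\big)$$ (dimensions taken in $\mathbb N\cup\{\infty\}$). In particular, the matrix product of two recurrence matrices $A\in\mathrm{Rec}_{p\times r}(\mathbf K)$, $B\in\mathrm{Rec}_{r\times q}(\mathbf K)$ is a recurrence matrix.
   Context: For $p,q,l\in\mathbb N$, $\mathcal M_{p\times q}^l$ is the set of pairs $(U,W)$ of words of common length $l$ with $U\in\{0,\dots,p-1\}^l$, $W\in\{0,\dots,q-1\}^l$, and $\mathcal M_{p\times q}=\bigcup_{l\ge0}\mathcal M_{p\times q}^l$, a monoid under concatenation $(U,W)(U',W')=(UU',WW')$. $\mathbf K^{\mathcal M_{p\times q}}$ is the vector space of all functions $\mathcal M_{p\times q}\to\mathbf K$; the value of $A$ at $(U,W)$ is written $A[U,W]$. For $(S,T)\in\mathcal M_{p\times q}$ the shift map $\rho(S,T)$ is the linear endomorphism of $\mathbf K^{\mathcal M_{p\times q}}$ given by $(\rho(S,T)A)[U,W]=A[US,WT]$. The recursive closure $\overline{A}^{rec}$ of $A$ is the linear span of $\{\rho(S,T)A:(S,T)\in\mathcal M_{p\times q}\}$; its dimension is the complexity of $A$, and $\mathrm{Rec}_{p\times q}(\mathbf K)$ (recurrence matrices) is the set of $A$ of finite complexity. The matrix product of $A\in\mathbf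 K^{\mathcal M_{p\times r}}$ and $B\in\mathbf K^{\mathcal M_{r\times q}}$ is $AB\in\mathbf K^{\mathcal M_{p\times q}}$ with $(AB)[U,W]=\sum_{V\in\{0,\dots,r-1\}^l}A[U,V]B[V,W]$ for $(U,W)\in\mathcal M_{p\times q}^l$. *)

From mathcomp Require Import all_boot all_algebra.
Unset Printing Implicit Defensive.
Import GRing.Theory.
Local Open Scope ring_scope.

(* Elements of K^{M_{p x q}}: functions on pairs (U,W) of words of common
   length l over alphabets {0..p-1} and {0..q-1}. *)
Definition recmat (K : fieldType) (p q : nat) : Type :=
  forall l : nat, l.-tuple 'I_p -> l.-tuple 'I_q -> K.

Definition recmat_eq (K : fieldType) (p q : nat) (A B : recmat K p q) : Prop :=
  forall l U W, A l U W = B l U W.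

Definition rho (K : fieldType) (p q k : nat) (S : k.-tuple 'I_p)
  (T : k.-tuple 'I_q) (A : recmat K p q) : recmat K p q :=
  fun l U W => A (l + k) (cat_tuple U S) (cat_tuple W T).

Definition monoid_elt (p q : nat) : Type :=
  {k : nat & (k.-tuple 'I_p * k.-tuple 'I_q)%type}.

Definition rho_elt (K : fieldType) (p q : nat) (s : monoid_elt p q)
  (A : recmat K p q) : recmat K p q :=
  @rho K p q (projT1 s) (projT2 s).1 (projT2 s).2 A.

Definition in_rec_closure (K : fieldType) (p q : nat) (A F : recmat K p q) : Prop :=
  exists (n : nat) (a : 'I_n -> K) (s : 'I_n -> monoid_elt p q),
    @recmat_eq K p q F (fun l U W => \sum_(i < n) a i * @rho_elt K p q (s i) A l U W).

(* dim(closure of A) <= d : any d+1 elements of the closure are linearly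
   dependent *)
Definition complexity_le (K : fieldType) (p q : nat) (A : recmat K p q) (d : nat) : Prop :=
  forall F : 'I_d.+1 -> recmat K p q,
    (forall i, @in_rec_closure K p q A (F i)) ->
    exists c : 'I_d.+1 -> K, (exists i, c i != 0) /\
      @recmat_eq K p q (fun l U W => \sum_(i < d.+1) c i * (F i) l U W)
                (fun _ _ _ => 0).

Definition is_recurrence (K : fieldType) (p q : nat) (A : recmat K p q) : Prop :=
  exists d : nat, @complexity_le K p q A d.

Definition recmat_mul (K : fieldType) (p r q : nat) (A : recmat K p r)
  (B : recmat K r q) : recmat K p q :=
  fun l U W => \sum_(V : l.-tuple 'I_r) A l U V * B l V W.
Arguments complexity_le {K p q} A d.
Arguments is_recurrence {K p q} A.
Arguments recmat_mul {K p r q} A B l U W.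

From mathcomp Require Import all_boot all_algebra.
From Stdlib Require Import Classical.
Unset Printing Implicit Defensive.
Import GRing.Theory.
Local Open Scope ring_scope.

(* Cutting the summation word of length l + k after its first l letters gives
   rho(S,T)(AB) = \sum_R rho(S,R)A * rho(R,T)B.  Hence if a functions span the
   recursive closure of A and b functions span that of B, then the a * b
   products of them span the recursive closure of AB, and any a * b + 1 of its
   elements are linearly dependent.  If A (or B) has complexity 0, all its
   shifts vanish, so every shift of AB vanishes whatever the other factor. *)

Arguments rho {K p q k} S T A l U W.
Arguments rho_elt {K p q} s A l U W.
Arguments in_rec_closure {K p q} A F.
Arguments recmat_eq {K p q} A B.

Lemma big_cat_tuple (R : Type) (idx : R) (op : Monoid.com_law idx)
    (T : finType) (l k : nat) (F : (l + k).-tuple T -> R) :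
  \big[op/idx]_(V : (l + k).-tuple T) F V =
  \big[op/idx]_(U : l.-tuple T) \big[op/idx]_(W : k.-tuple T) F (cat_tuple U W).
Proof.
rewrite pair_big /=.
have take_tupleP (V : (l + k).-tuple T) : size (take l V) == l.
  by rewrite size_takel // size_tuple leq_addr.
have drop_tupleP (V : (l + k).-tuple T) : size (drop l V) == k.
  by rewrite size_drop size_tuple addKn.
rewrite (reindex (fun UW : l.-tuple T * k.-tuple T => cat_tuple UW.1 UW.2)) //=.
exists (fun V => (Tuple (take_tupleP V), Tuple (drop_tupleP V))) => [[U W] _|V _].
  by congr pair; apply: val_inj; rewrite /= ?take_size_cat ?drop_size_cat ?size_tuple.
by apply: val_inj; rewrite /= cat_take_drop.
Qed.

Lemma exists_nonzero_left_kernel {K : fieldType} {m n : nat} (M : 'M[K]_(m, n)) :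
  (n < m)%N -> exists2 c : 'rV_m, c *m M = 0 & exists i, c 0 i != 0.
Proof.
move=> lt_nm; have : kermx M != 0.
  by rewrite kermx_eq0 -row_leq_rank -ltnNge (leq_ltn_trans (rank_leq_col M)).
case/rowV0Pn=> c /sub_kermxP cM c_neq0; exists c => //.
apply/existsP; apply: contraNT c_neq0; rewrite negb_exists => /forallP c0.
by apply/eqP/rowP => i; rewrite mxE; apply/eqP/negbNE.
Qed.

Section Span.
Context {K : fieldType} {p q : nat}.
Implicit Types F G : recmat K p q.

Definition lin_dependent {n : nat} (F : 'I_n -> recmat K p q) : Prop :=
  exists c : 'I_n -> K, (exists i, c i != 0) /\
    recmat_eq (fun l U W => \sum_(i < n) c i * F i l U W) (fun _ _ _ => 0).

Definition free_family {n : nat} (F : 'I_n -> recmat K p q) : Prop :=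
  forall c : 'I_n -> K,
    recmat_eq (fun l U W => \sum_(i < n) c i * F i l U W) (fun _ _ _ => 0) ->
    forall i, c i = 0.

Lemma lin_dependent_free {n : nat} {F : 'I_n -> recmat K p q} :
  lin_dependent F -> ~ free_family F.
Proof. by move=> [c [[i ci] cF]] freeF; rewrite (freeF c cF i) eqxx in ci. Qed.

Context {J : finType} {h : J -> recmat K p q}.

Definition in_span F : Prop :=
  exists x : J -> K, recmat_eq F (fun l U W => \sum_(j : J) x j * h j l U W).

Lemma in_span_ext {F G} : recmat_eq F G -> in_span G -> in_span F.
Proof. by move=> eFG [x Gx]; exists x => l U W; rewrite eFG Gx. Qed.

Lemma in_span_lincomb {I : Type} (r : seq I) (a : I -> K) (F : I -> recmat K p q) :
  (forall i, in_span (F i)) -> in_span (fun l U W => \sum_(i <- r) a i * F i l U W).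
Proof.
move=> spanF; elim: r => [|i r [x Fx]].
  by exists (fun _ => 0) => l U W; rewrite big_nil big1 // => j _; rewrite mul0r.
have [y Fiy] := spanF i; exists (fun j => a i * y j + x j) => l U W.
rewrite big_cons Fx Fiy mulr_sumr -big_split; apply: eq_bigr => j _.
by rewrite mulrA mulrDl.
Qed.

Lemma in_span_sum {I : Type} (r : seq I) (F : I -> recmat K p q) :
  (forall i, in_span (F i)) -> in_span (fun l U W => \sum_(i <- r) F i l U W).
Proof.
move=> spanF; apply: in_span_ext (in_span_lincomb r (fun _ => 1) _ spanF) => l U W.
by apply: eq_bigr => i _; rewrite mul1r.
Qed.

(* The coordinates of the F i in h form a d.+1 x #|J| matrix with a nonzero
   left kernel vector. *)
Lemma lin_dependent_in_span (d : nat) (F : 'I_d.+1 -> recmat K p q) :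
  (#|J| <= d)%N -> (forall i, in_span (F i)) -> lin_dependent F.
Proof.
move=> cardJ /fin_all_exists[x Fx].
pose M : 'M[K]_(d.+1, #|J|) := \matrix_(i, j) x i (enum_val j).
have [c cM c_neq0] := exists_nonzero_left_kernel M (leq_ltn_trans cardJ (ltnSn d)).
exists (c 0); split=> // l U W /=.
under eq_bigr => i _ do rewrite Fx mulr_sumr.
rewrite exchange_big big1 //= => j _.
have /rowP/(_ (enum_rank j)) := cM; rewrite !mxE => cMj.
transitivity ((\sum_i c 0 i * M i (enum_rank j)) * h j l U W).
  by rewrite mulr_suml; apply: eq_bigr => i _; rewrite mxE enum_rankK mulrA.
by rewrite cMj mul0r.
Qed.

Lemma complexity_le_in_span (A : recmat K p q) (d : nat) :
  (#|J| <= d)%N -> (forall F, in_rec_closure A F -> in_span F) ->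
  complexity_le A d.
Proof.
by move=> cardJ spanA F closF; apply: lin_dependent_in_span => // i; apply/spanA.
Qed.

End Span.

Arguments in_span {K p q J} h F.

Section FreeExtend.
Context {K : fieldType} {p q : nat}.

Definition free_extend {n : nat} (h : 'I_n -> recmat K p q) (F : recmat K p q) :
  'I_n.+1 -> recmat K p q :=
  fun i => if unlift ord_max i is Some j then h j else F.

Lemma free_extend_free {n : nat} (h : 'I_n -> recmat K p q) (F : recmat K p q) :
  free_family h -> ~ in_span h F -> free_family (free_extend h F).
Proof.
move=> free_h Fnotin c cF.
have cFh l U W :
    c ord_max * F l U W + \sum_(j < n) c (lift ord_max j) * h j l U W = 0.
  rewrite -[RHS](cF l U W) [RHS](bigD1_ord ord_max) //= /free_extend unlift_none.
  by congr (_ + _); apply: eq_bigr => j _; rewrite liftK.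
have c_max : c ord_max = 0.
  have [//|c_neq0] := eqVneq (c ord_max) 0; case: Fnotin.
  exists (fun j => - (c (lift ord_max j) / c ord_max)) => l U W.
  apply: (mulfI c_neq0); rewrite mulr_sumr.
  move/eqP: (cFh l U W); rewrite addr_eq0 => /eqP ->; rewrite -sumrN.
  by apply: eq_bigr => j _; rewrite mulNr mulrN mulrA mulrCA divff // mulr1.
have c_lift j : c (lift ord_max j) = 0.
  apply: (free_h (fun j => c (lift ord_max j))) => l U W.
  by move: (cFh l U W); rewrite c_max mul0r add0r.
by move=> i; case: (unliftP ord_max i) => [j ->|->].
Qed.

End FreeExtend.

Section Closure.
Context {K : fieldType} {p q : nat} (A : recmat K p q).

Lemma rho_in_rec_closure {k : nat} (S : k.-tuple 'I_p) (T : k.-tuple 'I_q) :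
  in_rec_closure A (rho S T A).
Proof.
exists 1%N, (fun _ => 1), (fun _ => existT _ k (S, T)) => l U W.
by rewrite big_ord1 mul1r.
Qed.

Lemma complexity_le0_rho : complexity_le A 0 ->
  forall k (S : k.-tuple 'I_p) (T : k.-tuple 'I_q),
    recmat_eq (rho S T A) (fun _ _ _ => 0).
Proof.
move=> A0 k S T l U W.
have [c [[i ci] cA]] := A0 (fun _ => rho S T A) (fun _ => rho_in_rec_closure S T).
rewrite (ord1 i) in ci; have := cA l U W; rewrite /= big_ord1 => /eqP.
by rewrite mulf_eq0 (negPf ci) => /eqP.
Qed.

(* Greedily extend a free family inside the closure until it spans it. *)
Lemma spanning_or_free (n : nat) :
  (exists a, (a < n)%N /\ exists f : 'I_a -> recmat K p q,
     forall F, in_rec_closure A F -> in_span f F) \/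
  (exists h : 'I_n -> recmat K p q,
     (forall i, in_rec_closure A (h i)) /\ free_family h).
Proof.
elim: n => [|n [[a [lt_an spanA]] | [h [closh free_h]]]].
- by right; exists (fun _ => A); split=> [[]|c _ []].
- by left; exists a; split; first exact: ltnW.
- have [spanA|] := classic (forall F, in_rec_closure A F -> in_span h F).
    by left; exists n; split; last exists h.
  move=> /not_all_ex_not[F] /(@imply_to_and (in_rec_closure A F))[closF Fnotin].
  right; exists (free_extend h F); split; last exact: free_extend_free.
  by move=> i; rewrite /free_extend; case: (unlift ord_max i).
Qed.

Lemma rec_closure_spanned (d : nat) : complexity_le A d ->
  exists a, (a <= d)%N /\ exists f : 'I_a -> recmat K p q,
    forall F, in_rec_closure A F -> in_span f F.
Proof.
move=> Ad; have [//|[h [closh free_h]]] := spanning_or_free d.+1.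
by case: (lin_dependent_free (Ad h closh) free_h).
Qed.

End Closure.

Arguments complexity_le0_rho {K p q A}.

Section Product.
Context {K : fieldType} {p r q : nat}.

Lemma in_span_mul (I J : finType) (f : I -> recmat K p r) (g : J -> recmat K r q)
    (F : recmat K p r) (G : recmat K r q) :
  in_span f F -> in_span g G ->
  in_span (fun ij : I * J => recmat_mul (f ij.1) (g ij.2)) (recmat_mul F G).
Proof.
move=> [x Fx] [y Gy]; exists (fun ij => x ij.1 * y ij.2) => l U W.
transitivity (\sum_(V : l.-tuple 'I_r) \sum_(i : I) \sum_(j : J)
    x i * y j * (f i l U V * g j l V W)).
  apply: eq_bigr => V _; rewrite Fx Gy mulr_suml; apply: eq_bigr => i _.
  by rewrite mulr_sumr; apply: eq_bigr => j _; rewrite mulrACA.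
rewrite exchange_big; under eq_bigr => i _ do rewrite exchange_big.
by rewrite pair_big; apply: eq_bigr => -[i j] _; rewrite mulr_sumr.
Qed.

Context (A : recmat K p r) (B : recmat K r q).

Lemma rho_recmat_mul {k : nat} (S : k.-tuple 'I_p) (T : k.-tuple 'I_q) :
  recmat_eq (rho S T (recmat_mul A B))
    (fun l U W => \sum_(R : k.-tuple 'I_r) recmat_mul (rho S R A) (rho R T B) l U W).
Proof. by move=> l U W; rewrite /rho /recmat_mul big_cat_tuple exchange_big. Qed.

Lemma rec_closure_mul_in_span (J : finType) (h : J -> recmat K p q) :
  (forall k (S : k.-tuple 'I_p) (R : k.-tuple 'I_r) (T : k.-tuple 'I_q),
      in_span h (recmat_mul (rho S R A) (rho R T B))) ->
  forall F, in_rec_closure (recmat_mul A B) F -> in_span h F.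
Proof.
move=> span_h F [n [a [s eF]]]; apply: (in_span_ext eF).
apply: in_span_lincomb => i; case: (s i) => k [S T].
by apply: (in_span_ext (rho_recmat_mul S T)); apply: in_span_sum.
Qed.

Lemma complexity_le_mul (m n : nat) :
  complexity_le A m -> complexity_le B n -> complexity_le (recmat_mul A B) (m * n).
Proof.
move=> /rec_closure_spanned[a [le_am [f spanA]]].
move=> /rec_closure_spanned[b [le_bn [g spanB]]].
pose fg (ij : 'I_a * 'I_b) := recmat_mul (f ij.1) (g ij.2).
apply: (complexity_le_in_span (h := fg)).
  by rewrite card_prod !card_ord leq_mul.
apply: rec_closure_mul_in_span => k S R T.
exact: in_span_mul (spanA _ (rho_in_rec_closure A S R))
                   (spanB _ (rho_in_rec_closure B R T)).
Qed.

Lemma complexity_le_mul0 :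
  (forall k (S : k.-tuple 'I_p) (R : k.-tuple 'I_r) (T : k.-tuple 'I_q) l U W,
      recmat_mul (rho S R A) (rho R T B) l U W = 0) ->
  complexity_le (recmat_mul A B) 0.
Proof.
move=> AB0; apply: (complexity_le_in_span (h := fun _ : 'I_0 => recmat_mul A B)) => [|F].
  by rewrite card_ord.
apply: rec_closure_mul_in_span => k S R T.
by exists (fun _ => 0) => l U W; rewrite big_ord0 AB0.
Qed.

Lemma complexity_le_mul0l :
  complexity_le A 0 -> complexity_le (recmat_mul A B) 0.
Proof.
move=> A0; apply: complexity_le_mul0 => k S R T l U W.
by rewrite /recmat_mul big1 // => V _; rewrite (complexity_le0_rho A0) mul0r.
Qed.

Lemma complexity_le_mul0r :
  complexity_le B 0 -> complexity_le (recmat_mul A B) 0.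
Proof.
move=> B0; apply: complexity_le_mul0 => k S R T l U W.
by rewrite /recmat_mul big1 // => V _; rewrite (complexity_le0_rho B0) mulr0.
Qed.

End Product.

Theorem mainTheorem1 (K : fieldType) (p q r : nat)
  (A : recmat K p r) (B : recmat K r q) :
  (forall m n : nat, complexity_le A m -> complexity_le B n ->
     complexity_le (recmat_mul A B) (m * n)) /\
  (complexity_le A 0 -> complexity_le (recmat_mul A B) 0) /\
  (complexity_le B 0 -> complexity_le (recmat_mul A B) 0) /\
  (is_recurrence A -> is_recurrence B -> is_recurrence (recmat_mul A B)).
Proof.
split; first exact: complexity_le_mul.
split; first exact: complexity_le_mul0l.
split; first exact: complexity_le_mul0r.
by move=> [m Am] [n Bn]; exists (m * n)%N; apply: complexity_le_mul.
Qed.
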